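(* Let $C$ be a hyperelliptic curve of genus $3$ over $\mathbb{C}$ given by $y^2=f(x)$ with $f$ a separable polynomial of degree $8$. Denote by $\alpha_1,\dots,\alpha_8$ the roots of $f$ and by $R_i=(\alpha_i,0)$ the corresponding branch points; for $w\in\mathbb{C}$ with $f(w)\neq 0$ let $P_1^w,P_2^w$ be the two points of $C$ over $x=w$. Then: (1) For $q=1$ and any $\beta\in\mathbb{C}$, the set $B_{1,\beta}=\left\{\frac{(x-\beta)^j}{y}\,dx : 0\le j\le 2\right\}$ is a basis of $H^0(C,(\Omega^1)^1)$. (2) For $q=2$, any $\beta\in\mathbb{C}$ and $m\in\{1,2\}$, the set $B_{2,\beta}=\left\{\frac{(x-\beta)^j}{y^2}(dx)^2 : 0\le j\le 4\right\}\cup\left\{\frac{y-f_{\beta,4,m}(x)}{y^2}(dx)^2\right\}$ is a basis of $H^0(C,(\Omega^1)^2)$, where $f_{\beta,4,m}(x)=0$ if $\beta$ is a root of $f$, and if $\beta=w$ is not a root of $f$ then $f_{w,4,m}(x)$ is the degree-$4$ Taylor polynomial at $x=w$ of the local branch of $y$ (as a function of $x$) through $P_m^w$. (3) For every $q\ge 2$ and every root $\beta$ of $f$, the set $B_{q,\beta}=\left\{\frac{(x-\beta)^j}{y^q}(dx)^q : 0\le j\le 2q\right\}\cup\left\{\frac{(x-\beta)^j y}{y^q}(dx)^q : 0\le j\le 2q-4\right\}$ is a basis of $H^0(C,(\Omega^1)^q)$.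
   Context: $H^0(C,(\Omega^1)^q)$ denotes the complex vector space of holomorphic $q$-differentials on the (smooth projective model of the) curve $C$; for genus $3$ its dimension is $3$ if $q=1$ and $2(2q-1)$ if $q\ge 2$. *)

From HB Require Import structures.
From mathcomp Require Import all_boot all_order all_algebra all_field.
From mathcomp Require Import fraction complex.
From mathcomp Require Import Rstruct.
From Stdlib Require Import Reals.

Set Implicit Arguments.
Unset Strict Implicit.
Unset Printing Implicit Defensive.

Import GRing.Theory.
Local Open Scope ring_scope.

Definition CC : closedFieldType := complex Rdefinitions.R.

Definition RF := {fraction {poly CC}}.
Definition rf (p : {poly CC}) : RF := tofrac p.
Definition rfc (c : CC) : RF := tofrac (c%:P).
Definition rfx : RF := tofrac 'X.

(* The function field C(C) = C(x)[y]/(y^2 - f).  Since f is not a square,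
   every element is uniquely A + B y with A, B in C(x); we represent it by
   the pair (A, B). *)
Definition FF := (RF * RF)%type.

Definition ffadd (g h : FF) : FF := (g.1 + h.1, g.2 + h.2).
Definition ffmul (f : {poly CC}) (g h : FF) : FF :=
  (g.1 * h.1 + g.2 * h.2 * rf f, g.1 * h.2 + g.2 * h.1).
(* (A + B y)^-1 = (A - B y) / (A^2 - B^2 f) *)
Definition ffinv (f : {poly CC}) (g : FF) : FF :=
  let n := g.1 ^+ 2 - g.2 ^+ 2 * rf f in (g.1 / n, - g.2 / n).
Definition ffexp (f : {poly CC}) (g : FF) (n : nat) : FF :=
  iter n (ffmul f g) (1, 0).
Definition ffX (A : RF) : FF := (A, 0).
Definition ffy : FF := (0, 1).
Definition ffpoly (p : {poly CC}) : FF := ffX (rf p).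

(* The affine curve y^2 = f is smooth
   (f separable), so the local ring at (a, b) is the localisation of
   C[x, y]/(y^2 - f) at the maximal ideal of (a, b):
   g is regular at (a,b) iff g = U/V with U, V polynomial in x, y and
   V(a, b) <> 0. *)
Definition regular_aff (f : {poly CC}) (a b : CC) (g : FF) : Prop :=
  exists U0 U1 V0 V1 : {poly CC},
    V0.[a] + V1.[a] * b != 0 /\
    ffmul f g (rf V0, rf V1) = (rf U0, rf U1).

Definition evinvx (p : {poly CC}) : RF :=
  \sum_(i < size p) rfc p`_i / rfx ^+ i.

(* Chart at infinity: u = 1/x, v = y/x^4, with v^2 = u^8 f(1/u), a smooth
   affine curve near u = 0 (the leading coefficient of f is non zero).
   The two points at infinity are (u, v) = (0, c) with c^2 = lead_coef f.
   g is regular at (0, c) iff g = U(u,v)/V(u,v) with V(0, c) <> 0. *)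
Definition uv_elt (V0 V1 : {poly CC}) : FF :=
  (evinvx V0, evinvx V1 / rfx ^+ 4).
Definition regular_inf (f : {poly CC}) (c : CC) (g : FF) : Prop :=
  exists U0 U1 V0 V1 : {poly CC},
    V0.[0] + V1.[0] * c != 0 /\
    ffmul f g (uv_elt V0 V1) = uv_elt U0 U1.

(* A q-differential is omega = g (dx)^q with g in the function field; we
   identify omega with g.  omega is holomorphic at a point P iff, writing
   omega = h (dt)^q for a local parameter t at P, h is regular at P:
   - (a, b) affine with b <> 0 : t = x - a, dx/dt = 1, h = g;
   - (a, 0) branch point       : t = y, dx/dy = 2y/f'(x), h = g (2y/f')^q;
   - (0, c) point at infinity  : t = u = 1/x, dx/du = -x^2, h = g (-x^2)^q. *)
Definition holo_at_aff (f : {poly CC}) (q : nat) (a b : CC) (g : FF) : Prop :=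
  if b == 0 then
    regular_aff f a b
      (ffmul f g (ffexp f (ffmul f ffy (ffX (rfc 2 / rf f^`()))) q))
  else regular_aff f a b g.

Definition holo_at_inf (f : {poly CC}) (q : nat) (c : CC) (g : FF) : Prop :=
  regular_inf f c (ffmul f g (ffexp f (ffX (- rfx ^+ 2)) q)).

Definition holo_qdiff (f : {poly CC}) (q : nat) (g : FF) : Prop :=
  (forall a b : CC, b ^+ 2 = f.[a] -> holo_at_aff f q a b g) /\
  (forall c : CC, c ^+ 2 = lead_coef f -> holo_at_inf f q c g).

Definition ffcomb (B : seq FF) (c : 'I_(size B) -> CC) : FF :=
  (\sum_(i < size B) rfc (c i) * (nth (0, 0) B i).1,
   \sum_(i < size B) rfc (c i) * (nth (0, 0) B i).2).

Definition is_basis_H0 (f : {poly CC}) (q : nat) (B : seq FF) : Prop :=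
  (forall g, g \in B -> holo_qdiff f q g) /\
  (forall c : 'I_(size B) -> CC, ffcomb c = (0, 0) -> forall i, c i = 0) /\
  (forall g, holo_qdiff f q g -> exists c : 'I_(size B) -> CC, ffcomb c = g).

Definition ffyinv (f : {poly CC}) (q : nat) : FF := ffinv f (ffexp f ffy q).

Definition bq_elt (f : {poly CC}) (q : nat) (beta : CC) (j : nat) : FF :=
  ffmul f (ffpoly (('X - beta%:P) ^+ j)) (ffyinv f q).

Definition bq_elt_y (f : {poly CC}) (q : nat) (beta : CC) (j : nat) : FF :=
  ffmul f (ffmul f (ffpoly (('X - beta%:P) ^+ j)) ffy) (ffyinv f q).

Definition binom_half (k : nat) : CC :=
  (\prod_(i < k) (2^-1 - i%:R)) / (k`!)%:R.

(* Degree-4 Taylor polynomial at x = w (f(w) <> 0) of the local branch of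
   y = sqrt(f(x)) through the point (w, b), b^2 = f(w):
   y = b (1 + h)^{1/2} with h = f/f(w) - 1, h(w) = 0, so near w
   y = b sum_k binom(1/2,k) h^k, whose Taylor polynomial of degree 4 is the
   remainder of b sum_{k<=4} binom(1/2,k) h^k modulo (x - w)^5. *)
Definition taylor4_branch (f : {poly CC}) (w b : CC) : {poly CC} :=
  let h := (f.[w])^-1 *: f - 1 in
  (b *: \sum_(k < 5) binom_half k *: h ^+ k) %% ('X - w%:P) ^+ 5.

(* f_{beta,4,m} where the point P_m^beta is (beta, b) *)
Definition f_beta4 (f : {poly CC}) (beta b : CC) : {poly CC} :=
  if root f beta then 0 else taylor4_branch f beta b.

Definition B1 (f : {poly CC}) (beta : CC) : seq FF :=
  [seq bq_elt f 1 beta j | j <- iota 0 3].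

Definition B2 (f : {poly CC}) (beta b : CC) : seq FF :=
  [seq bq_elt f 2 beta j | j <- iota 0 5] ++
  [:: ffmul f (ffadd ffy (ffpoly (- f_beta4 f beta b))) (ffyinv f 2)].

Definition Bq (f : {poly CC}) (q : nat) (beta : CC) : seq FF :=
  [seq bq_elt f q beta j | j <- iota 0 (2 * q).+1] ++
  [seq bq_elt_y f q beta j | j <- iota 0 (2 * q - 3)].

(* Write a q-differential as g (dx)^q with g = G / y^q in C(x)[y]/(y^2 - f).
   Regularity at both points (a, b) and (a, -b) over x = a makes both
   coordinates of G = A + B y regular at a (multiply a denominator at one point
   by the conjugate of a denominator at the other), so A and B are polynomials;
   at a branch point the factor dx/dy = 2y/f' exactly cancels y^q.  In the
   chart u = 1/x, v = y/x^4 at infinity, dx = -x^2 du turns g (dx)^q into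
   (-1)^q (u^{2q} A(1/u) + u^{2q-4} B(1/u) v) / v^q (du)^q, which is regular
   iff deg A <= 2q and deg B <= 2q - 4.  Hence H^0 consists of the
   (A + B y)/y^q (dx)^q with these degree bounds, and each family of the
   statement is triangular with respect to the basis of shifted monomials
   (x - beta)^j and (x - beta)^j y of this space. *)

From HB Require Import structures.
From mathcomp Require Import all_boot all_order all_algebra all_field.
From mathcomp Require Import fraction complex.
From mathcomp Require Import Rstruct ring zify.
Local Open Scope ring_scope.
Import GRing.Theory Num.Theory.

Set Implicit Arguments.
Unset Strict Implicit.
Unset Printing Implicit Defensive.

(** * The function field *)

Lemma rfM p q : rf (p * q) = rf p * rf q.  Proof. exact: rmorphM. Qed.
Lemma rfD p q : rf (p + q) = rf p + rf q.  Proof. exact: rmorphD. Qed.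
Lemma rfN p : rf (- p) = - rf p.           Proof. exact: rmorphN. Qed.
Lemma rf0 : rf 0 = 0.                      Proof. exact: rmorph0. Qed.
Lemma rf1 : rf 1 = 1.                      Proof. exact: rmorph1. Qed.
Lemma rfX p n : rf (p ^+ n) = rf p ^+ n.   Proof. exact: rmorphXn. Qed.
Lemma rfZ c p : rf (c *: p) = rfc c * rf p.
Proof. by rewrite -mul_polyC rfM. Qed.

Lemma rf_eq0 p : (rf p == 0) = (p == 0).
Proof. exact: tofrac_eq0. Qed.

Lemma rfcM (x y : CC) : rfc (x * y) = rfc x * rfc y.
Proof. by rewrite /rfc polyCM rmorphM. Qed.
Lemma rfc1 : rfc 1 = 1.
Proof. by rewrite /rfc rmorph1. Qed.
Lemma rfcX (x : CC) n : rfc (x ^+ n) = rfc x ^+ n.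
Proof. by rewrite /rfc !rmorphXn. Qed.
Lemma rfcN (x : CC) : rfc (- x) = - rfc x.
Proof. by rewrite /rfc !rmorphN. Qed.

Lemma rfx_neq0 : rfx != 0.
Proof. by rewrite /rfx tofrac_eq0 polyX_eq0. Qed.

Lemma rfxX_neq0 n : rfx ^+ n != 0.
Proof. by rewrite expf_neq0 // rfx_neq0. Qed.

Section FunctionField.

Variable f : {poly CC}.

Lemma ffmulC (g h : FF) : ffmul f g h = ffmul f h g.
Proof. case: g h => [a b] [c d]; rewrite /ffmul /=; congr pair; ring. Qed.

Lemma ffmulA (g h k : FF) : ffmul f g (ffmul f h k) = ffmul f (ffmul f g h) k.
Proof. case: g h k => [a b] [c d] [e e']; rewrite /ffmul /=; congr pair; ring. Qed.

Lemma ffmul1 (g : FF) : ffmul f (1, 0) g = g.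
Proof. case: g => [a b]; rewrite /ffmul /=; congr pair; ring. Qed.

Lemma ffmulX (s a b : RF) : ffmul f (ffX s) (a, b) = (s * a, s * b).
Proof. rewrite /ffmul /ffX /=; congr pair; ring. Qed.

Lemma ffXM (a b : RF) : ffmul f (ffX a) (ffX b) = ffX (a * b).
Proof. by rewrite [ffX b]/ffX ffmulX mulr0. Qed.

Lemma ffexpS (g : FF) n : ffexp f g n.+1 = ffmul f g (ffexp f g n).
Proof. by []. Qed.

Lemma ffexpMn (g h : FF) n :
  ffexp f (ffmul f g h) n = ffmul f (ffexp f g n) (ffexp f h n).
Proof.
elim: n => [|n IHn]; first by rewrite ffmul1.
rewrite !ffexpS IHn !ffmulA; congr ffmul.
by rewrite -!ffmulA [ffmul f h _]ffmulC.
Qed.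

Lemma ffexpX (a : RF) n : ffexp f (ffX a) n = ffX (a ^+ n).
Proof. by elim: n => [//|n IHn]; rewrite ffexpS IHn ffXM exprS. Qed.

Definition ffnorm (g : FF) : RF := g.1 ^+ 2 - g.2 ^+ 2 * rf f.

Lemma ffnormM (g h : FF) : ffnorm (ffmul f g h) = ffnorm g * ffnorm h.
Proof. case: g h => [a b] [c d]; rewrite /ffnorm /ffmul /=; ring. Qed.

Lemma ffnormX (g : FF) n : ffnorm (ffexp f g n) = ffnorm g ^+ n.
Proof.
elim: n => [|n IHn]; first by rewrite /ffnorm /=; ring.
by rewrite ffexpS ffnormM IHn exprS.
Qed.

Lemma ffnorm_y : ffnorm ffy = - rf f.
Proof. rewrite /ffnorm /ffy /=; ring. Qed.

Lemma ffmulVf (g : FF) : ffnorm g != 0 -> ffmul f (ffinv f g) g = (1, 0).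
Proof.
case: g => [a b]; rewrite /ffnorm /ffinv /ffmul /= => nz_n.
set n := a ^+ 2 - b ^+ 2 * rf f in nz_n *.
congr pair; last by rewrite /n; ring.
have -> : a / n * a + - b / n * b * rf f = n / n by rewrite /n; ring.
exact: divff.
Qed.

Hypothesis nz_f : f != 0.

Lemma ffmul_yinv_yexp q : ffmul f (ffyinv f q) (ffexp f ffy q) = (1, 0).
Proof. by apply: ffmulVf; rewrite ffnormX ffnorm_y expf_neq0 // oppr_eq0 rf_eq0. Qed.

Lemma ffmul_yexpK q (g : FF) :
  ffmul f (ffmul f g (ffexp f ffy q)) (ffyinv f q) = g.
Proof. by rewrite -ffmulA [ffmul f (ffexp f _ _) _]ffmulC ffmul_yinv_yexp ffmulC ffmul1. Qed.

Lemma ffmul_yinv_ycexp q (G : FF) (c : RF) :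
  ffmul f (ffmul f G (ffyinv f q)) (ffexp f (ffmul f ffy (ffX c)) q)
  = ffmul f (ffX (c ^+ q)) G.
Proof.
rewrite ffexpMn ffexpX -ffmulA [ffmul f (ffyinv f q) _]ffmulA.
by rewrite ffmul_yinv_yexp ffmul1 ffmulC.
Qed.

End FunctionField.

(* Elements [V.1 + V.2 y] of the coordinate ring [C[x, y]/(y^2 - F)]. *)
Definition PP := ({poly CC} * {poly CC})%type.

Definition ppmul (F : {poly CC}) (V W : PP) : PP :=
  (V.1 * W.1 + V.2 * W.2 * F, V.1 * W.2 + V.2 * W.1).
Definition ppexp (F : {poly CC}) (V : PP) n : PP := iter n (ppmul F V) (1, 0).
Definition ppeval (a b : CC) (V : PP) : CC := V.1.[a] + V.2.[a] * b.
Definition ffpp (V : PP) : FF := (rf V.1, rf V.2).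

Lemma ffpp_mul f V W : ffpp (ppmul f V W) = ffmul f (ffpp V) (ffpp W).
Proof. by case: V W => [a b] [c d]; rewrite /ffpp /ppmul /ffmul /= !(rfD, rfM). Qed.

Lemma ffpp_exp f V n : ffpp (ppexp f V n) = ffexp f (ffpp V) n.
Proof.
elim: n => [|n IHn]; first by rewrite /ffpp /= rf1 rf0.
by rewrite /ppexp iterS -/(ppexp f V n) ffpp_mul IHn.
Qed.

Lemma ffy_pp : ffy = ffpp (0, 1).
Proof. by rewrite /ffpp /= rf0 rf1. Qed.

Lemma ppeval_y a b : ppeval a b (0, 1) = b.
Proof. by rewrite /ppeval /= horner0 hornerC mul1r add0r. Qed.

Section PointEvaluation.

Variables (F : {poly CC}) (a b : CC).
Hypothesis on_curve : b ^+ 2 = F.[a].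

Lemma ppeval_mul V W : ppeval a b (ppmul F V W) = ppeval a b V * ppeval a b W.
Proof.
case: V W => [v0 v1] [w0 w1]; rewrite /ppeval /ppmul /=.
rewrite !(hornerD, hornerM) -on_curve; ring.
Qed.

Lemma ppeval_exp V n : ppeval a b (ppexp F V n) = ppeval a b V ^+ n.
Proof.
elim: n => [|n IHn]; first by rewrite /ppeval /= hornerC horner0 mul0r addr0.
by rewrite /ppexp iterS -/(ppexp F V n) ppeval_mul IHn exprS.
Qed.

End PointEvaluation.

Lemma regular_aff_mul f a b g S :
  regular_aff f a b g -> regular_aff f a b (ffmul f g (ffpp S)).
Proof.
move=> [U0 [U1 [V0 [V1 [nz_V eUV]]]]].
exists (ppmul f (U0, U1) S).1, (ppmul f (U0, U1) S).2, V0, V1; split=> //.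
rewrite -ffmulA (ffmulC _ (ffpp S)) ffmulA.
rewrite (_ : (rf V0, rf V1) = ffpp (V0, V1)) // eUV.
exact: (esym (ffpp_mul f (U0, U1) S)).
Qed.

(** * Poles *)

(* [A] is regular at [a] in the coordinate given by [phi], which is [p |-> p]
   on the affine line and [p |-> p(1/x)] in the coordinate [u = 1/x]. *)
Definition no_pole_at (phi : {poly CC} -> RF) (a : CC) (A : RF) : Prop :=
  exists D E : {poly CC}, D.[a] != 0 /\ A * phi D = phi E.

Section BothSheets.

Variable phi : {poly CC} -> RF.
Hypothesis phiD : forall p q, phi (p + q) = phi p + phi q.
Hypothesis phiN : forall p, phi (- p) = - phi p.
Hypothesis phiM : forall p q, phi (p * q) = phi p * phi q.

(* The product of [V] with the conjugate of [W] is a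
   common denominator [M0 + M1 y] with [M(a, b) = V(a, b) W(a, -b) <> 0]; both
   [A M0, B M0] and [A M1, B M1 F] are polynomial, and [M0(a)] or [M1(a)] is
   nonzero. *)
Lemma no_pole_at_both_sheets (F : {poly CC}) (a b : CC) (A B : RF)
    (V0 V1 U0 U1 W0 W1 T0 T1 : {poly CC}) :
  b ^+ 2 = F.[a] ->
  V0.[a] + V1.[a] * b != 0 -> W0.[a] + W1.[a] * (- b) != 0 ->
  A * phi V0 + B * phi V1 * phi F = phi U0 -> A * phi V1 + B * phi V0 = phi U1 ->
  A * phi W0 + B * phi W1 * phi F = phi T0 -> A * phi W1 + B * phi W0 = phi T1 ->
  no_pole_at phi a A /\ no_pole_at phi a B.
Proof.
move=> on_curve nz_V nz_W eU0 eU1 eT0 eT1.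
set M0 := V0 * W0 - V1 * W1 * F; set M1 := V1 * W0 - V0 * W1.
have AM0 : A * phi M0 = phi (U0 * W0 - T1 * V1 * F).
  by rewrite /M0 !(phiD, phiN, phiM) -eU0 -eT1; ring.
have AM1 : A * phi M1 = phi (U1 * W0 - T1 * V0).
  by rewrite /M1 !(phiD, phiN, phiM) -eU1 -eT1; ring.
have BM0 : B * phi M0 = phi (U1 * W0 - T0 * V1).
  by rewrite /M0 !(phiD, phiN, phiM) -eU1 -eT0; ring.
have BM1 : B * phi (M1 * F) = phi (U0 * W0 - T0 * V0).
  by rewrite /M1 !(phiD, phiN, phiM) -eU0 -eT0; ring.
have eM : M0.[a] + M1.[a] * b = (V0.[a] + V1.[a] * b) * (W0.[a] + W1.[a] * (- b)).
  by rewrite /M0 /M1 !(hornerD, hornerN, hornerM) -on_curve; ring.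
have [M0a0 | nz_M0a] := eqVneq M0.[a] 0.
  have : M0.[a] + M1.[a] * b != 0 by rewrite eM mulf_neq0.
  rewrite M0a0 add0r mulf_eq0 negb_or => /andP [nz_M1a nz_b].
  have nz_Fa : F.[a] != 0 by rewrite -on_curve expf_neq0.
  split; first by exists M1, (U1 * W0 - T1 * V0).
  by exists (M1 * F), (U0 * W0 - T0 * V0); rewrite hornerM mulf_neq0.
by split; [exists M0, (U0 * W0 - T1 * V1 * F) | exists M0, (U1 * W0 - T0 * V1)].
Qed.

End BothSheets.

(* Induction on the size of a denominator [D]: if [D] is not constant, pick a
   root [a] of [D] and a denominator [D'] of [A] with [D'(a) <> 0]; then
   [D' %% D] is a smaller nonzero denominator. *)
Lemma polynomial_of_no_pole (A : RF) :
  (forall a, no_pole_at rf a A) -> exists P, A = rf P.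
Proof.
move=> regA.
suff: forall n (D E : {poly CC}), (size D <= n)%N -> D != 0 -> A * rf D = rf E ->
    exists P, A = rf P.
  have [D [E [nz_D0 eDE]]] := regA 0.
  move/(_ (size D) D E (leqnn _)); apply=> //.
  by apply: contraNneq nz_D0 => ->; rewrite horner0.
elim=> [|n IHn] D E le_Dn nz_D eDE.
  by move: nz_D; rewrite -size_poly_eq0 -leqn0 le_Dn.
have [size_D1 | size_Dn1] := eqVneq (size D) 1%N.
  have := size1_polyC (eq_leq size_D1); set c := D`_0 => eD.
  have nz_c : c != 0 by apply: contraNneq nz_D => c0; rewrite eD c0.
  exists (c^-1 *: E); rewrite rfZ -eDE eD -/(rfc c).
  by rewrite mulrCA -rfcM mulVf // rfc1 mulr1.
have [a Da0] := closed_rootP D size_Dn1.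
have [D' [E' [nz_D'a eD'E']]] := regA a.
have eAr : A * rf (D' %% D) = rf (E' - (D' %/ D) * E).
  rewrite (_ : D' %% D = D' - (D' %/ D) * D); last first.
    by rewrite {2}(divp_eq D' D) addrAC subrr add0r.
  by rewrite rfD rfN !rfM mulrDr eD'E' mulrN mulrCA eDE rfD rfN rfM.
have [r0 | nz_r] := eqVneq (D' %% D) 0.
  move: nz_D'a; rewrite (divp_eq D' D) r0 addr0 hornerM.
  by move/rootP: Da0 => ->; rewrite mulr0 eqxx.
apply: (IHn _ _ _ nz_r eAr).
by rewrite -ltnS (leq_trans (ltn_modpN0 D' nz_D) le_Dn).
Qed.

Lemma no_pole_of_regular_aff f a b (A B : RF) : b ^+ 2 = f.[a] ->
  regular_aff f a b (A, B) -> regular_aff f a (- b) (A, B) ->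
  no_pole_at rf a A /\ no_pole_at rf a B.
Proof.
move=> on_curve [U0 [U1 [V0 [V1 [nz_V eUV]]]]] [T0 [T1 [W0 [W1 [nz_W eTW]]]]].
move: eUV eTW; rewrite /ffmul /= => [[eU0 eU1] [eT0 eT1]].
exact: (no_pole_at_both_sheets rfD rfN rfM on_curve nz_V nz_W eU0 eU1 eT0 eT1).
Qed.

(** * The chart at infinity *)

Definition evinv (p : {poly CC}) : RF := (map_poly (@tofrac _ \o polyC) p).[rfx^-1].

Lemma evinvxE p : evinvx p = evinv p.
Proof.
rewrite /evinv /evinvx (@horner_coef_wide _ (size p)) ?size_poly //.
by apply: eq_bigr => i _; rewrite coef_map /= exprVn.
Qed.

Lemma evinvM p q : evinv (p * q) = evinv p * evinv q.
Proof. by rewrite /evinv rmorphM hornerM. Qed.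
Lemma evinvD p q : evinv (p + q) = evinv p + evinv q.
Proof. by rewrite /evinv rmorphD hornerD. Qed.
Lemma evinvN p : evinv (- p) = - evinv p.
Proof. by rewrite /evinv rmorphN hornerN. Qed.
Lemma evinv1 : evinv 1 = 1.
Proof. by rewrite /evinv rmorph1 hornerC. Qed.
Lemma evinv0 : evinv 0 = 0.
Proof. by rewrite /evinv rmorph0 horner0. Qed.
Lemma evinvZ c p : evinv (c *: p) = rfc c * evinv p.
Proof. by rewrite -mul_polyC evinvM /evinv map_polyC hornerC. Qed.

Definition revp (N : nat) (p : {poly CC}) : {poly CC} := \poly_(i < N.+1) p`_(N - i).

Lemma size_revp N (p : {poly CC}) : (size (revp N p) <= N.+1)%N.
Proof. exact: size_poly. Qed.

Lemma size_revp_eq N (p : {poly CC}) : p`_0 != 0 -> size (revp N p) = N.+1.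
Proof.
move=> nz_p0; apply/eqP; rewrite eqn_leq size_revp /= ltnNge; apply/negP => le_sN.
have := nth_default 0 le_sN; rewrite /revp coef_poly ltnSn subnn => p0.
by rewrite p0 eqxx in nz_p0.
Qed.

Lemma revpK N (p : {poly CC}) : (size p <= N.+1)%N -> revp N (revp N p) = p.
Proof.
move=> le_pN; apply/polyP => i; rewrite /revp !coef_poly.
case: ltnP => [lt_iN | le_Ni].
  by rewrite ifT ?ltnS ?leq_subr // subKn // -ltnS.
by rewrite nth_default // (leq_trans le_pN le_Ni).
Qed.

Lemma rf_revp N (p : {poly CC}) : (size p <= N.+1)%N -> rf (revp N p) = rfx ^+ N * evinv p.
Proof.
move=> le_pN; rewrite /evinv (@horner_coef_wide _ N.+1); last first.
  exact: leq_trans (size_poly _ _) le_pN.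
rewrite /revp poly_def /rf rmorph_sum /= mulr_sumr [RHS](reindex_inj rev_ord_inj) /=.
apply: eq_bigr => i _; rewrite coef_map /= exprVn subSS.
rewrite -mul_polyC rmorphM rmorphXn /= -/(rfc _) -/rfx mulrCA; congr (_ * _).
have le_iN : (i <= N)%N by rewrite -ltnS.
have -> : rfx ^+ N = rfx ^+ i * rfx ^+ (N - i) by rewrite -exprD subnKC.
by rewrite -mulrA divff ?mulr1 // rfxX_neq0.
Qed.

Lemma evinv_revp N (p : {poly CC}) : (size p <= N.+1)%N -> evinv (revp N p) = rf p / rfx ^+ N.
Proof.
move=> le_pN; have := rf_revp (size_revp N p); rewrite revpK // => ->.
by rewrite mulrC mulKf // rfxX_neq0.
Qed.

Lemma size_le_of_evinv (p W U : {poly CC}) m :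
  W.[0] != 0 -> rf p * evinv W = rfx ^+ m * evinv U -> (size p <= m.+1)%N.
Proof.
move=> nz_W0 eWU; have [->|nz_p] := eqVneq p 0; first by rewrite size_poly0.
set N := maxn (size W) (size U).
have le_WN : (size W <= N.+1)%N by rewrite leqW // leq_maxl.
have le_UN : (size U <= N.+1)%N by rewrite leqW // leq_maxr.
have /eqP : rf (p * revp N W) = rf ('X^m * revp N U).
  rewrite !rfM (rf_revp le_WN) (rf_revp le_UN) /rf rmorphXn /= -/rfx.
  by rewrite mulrCA eWU; ring.
rewrite /rf tofrac_eq => /eqP epWU.
have nz_W00 : W`_0 != 0 by rewrite -horner_coef0.
have nz_rW : revp N W != 0 by rewrite -size_poly_eq0 size_revp_eq.
have := size_mul nz_p nz_rW; rewrite epWU size_revp_eq // addnS /= => size_XU.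
have := size_polyMleq 'X^m (revp N U); rewrite size_polyXn size_XU addSn /=.
have := size_revp N U; move: (size p) (size (revp N U)) => sp sU; lia.
Qed.

(* Reciprocal of [f]: the chart at infinity is [v^2 = frev f (u)]. *)
Definition frev (f : {poly CC}) := revp 8 f.
Definition uv (V : PP) : FF := uv_elt V.1 V.2.

Section Infinity.

Variable f : {poly CC}.
Hypothesis size_f : size f = 9%N.

Lemma evinv_frev : evinv (frev f) = rf f / rfx ^+ 8.
Proof. by rewrite /frev evinv_revp // size_f. Qed.

Lemma frev0 : (frev f).[0] = lead_coef f.
Proof. by rewrite horner_coef0 /frev /revp coef_poly /lead_coef size_f. Qed.

Lemma uv_mul V W : uv (ppmul (frev f) V W) = ffmul f (uv V) (uv W).
Proof.
case: V W => [v0 v1] [w0 w1].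
rewrite /uv /uv_elt /ppmul /ffmul /= !evinvxE !evinvD !evinvM evinv_frev.
rewrite (_ : (rfx ^+ 8)^-1 = (rfx ^+ 4)^-1 ^+ 2); last by rewrite exprVn -exprM.
congr pair; ring.
Qed.

Lemma uv_exp V n : uv (ppexp (frev f) V n) = ffexp f (uv V) n.
Proof.
elim: n => [|n IHn]; first by rewrite /uv /uv_elt /= !evinvxE evinv1 evinv0 mul0r.
by rewrite /ppexp iterS -/(ppexp _ V n) uv_mul IHn.
Qed.

Lemma regular_inf_mul c h S :
  regular_inf f c h -> regular_inf f c (ffmul f h (uv S)).
Proof.
move=> [U0 [U1 [V0 [V1 [nz_V eUV]]]]].
exists (ppmul (frev f) (U0, U1) S).1, (ppmul (frev f) (U0, U1) S).2, V0, V1; split=> //.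
rewrite -ffmulA (ffmulC _ (uv S)) ffmulA eUV.
exact: (esym (uv_mul (U0, U1) S)).
Qed.

Lemma regular_inf_evinv c (A B : RF) : regular_inf f c (A, B) ->
  exists U0 U1 V0 V1 : {poly CC}, V0.[0] + V1.[0] * c != 0 /\
    A * evinv V0 + (B * rfx ^+ 4) * evinv V1 * evinv (frev f) = evinv U0 /\
    A * evinv V1 + (B * rfx ^+ 4) * evinv V0 = evinv U1.
Proof.
move=> [U0 [U1 [V0 [V1 [nz_V]]]]]; rewrite /uv_elt /ffmul /= !evinvxE => -[eU0 eU1].
exists U0, U1, V0, V1; split=> //.
have nz_x4 := rfxX_neq0 4; split.
  rewrite -eU0 evinv_frev.
  have -> : (rfx ^+ 8)^-1 = (rfx ^+ 4)^-1 * (rfx ^+ 4)^-1 by rewrite -invfM -exprD.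
  by rewrite -[in RHS](mulr1 B) -(divff nz_x4); ring.
by rewrite -[evinv U1](divfK nz_x4) -eU1 -[in LHS](mulr1 A) -(divff nz_x4); ring.
Qed.

Lemma no_pole_of_regular_inf c (A B : RF) : c ^+ 2 = lead_coef f ->
  regular_inf f c (A, B) -> regular_inf f (- c) (A, B) ->
  no_pole_at evinv 0 A /\ no_pole_at evinv 0 (B * rfx ^+ 4).
Proof.
move=> c2 /regular_inf_evinv [U0 [U1 [V0 [V1 [nz_V [eU0 eU1]]]]]].
move=> /regular_inf_evinv [T0 [T1 [W0 [W1 [nz_W [eT0 eT1]]]]]].
have c2' : c ^+ 2 = (frev f).[0] by rewrite frev0.
exact: (no_pole_at_both_sheets evinvD evinvN evinvM c2' nz_V nz_W eU0 eU1 eT0 eT1).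
Qed.

End Infinity.

Definition dudx : RF := - (rfx ^+ 2)^-1.

Lemma dudxX q : dudx ^+ q = rfc ((-1) ^+ q) / rfx ^+ (2 * q).
Proof. by rewrite /dudx rfcX rfcN rfc1 -mulN1r exprMn exprVn -exprM mulnC. Qed.

Lemma size_le_of_no_pole_inf q p :
  no_pole_at evinv 0 (dudx ^+ q * rf p) -> (size p <= (2 * q).+1)%N.
Proof.
move=> [D [E [nz_D0 eDE]]]; apply: (@size_le_of_evinv p D ((-1) ^+ q *: E) _ nz_D0).
rewrite evinvZ -eDE dudxX.
have ss : rfc ((-1) ^+ q) * rfc ((-1) ^+ q) = 1 by rewrite -rfcM -expr2 sqrr_sign rfc1.
move: (rfc _) (rfx ^+ _) ss (rfxX_neq0 (2 * q)) => s X ss nz_X.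
have -> : X * (s * (s / X * rf p * evinv D)) = s * s * (X / X) * (rf p * evinv D).
  ring.
by rewrite ss divff // !mul1r.
Qed.

(** * Shifted monomials *)

Section ShiftedMonomials.

Variables (R : comNzRingType) (beta : R).

Lemma shifted_monomials_free n (d : nat -> R) :
  \sum_(j < n) d j *: ('X - beta%:P) ^+ j = 0 -> forall j, (j < n)%N -> d j = 0.
Proof.
move=> e0 j lt_jn.
have : \sum_(j < n) d j *: 'X ^+ j =
    (\sum_(j < n) d j *: ('X - beta%:P) ^+ j) \Po ('X + beta%:P).
  rewrite linear_sum; apply: eq_bigr => i _.
  by rewrite /= comp_polyZ rmorphXn /= comp_polyB comp_polyX comp_polyC addrK.
rewrite e0 comp_poly0 -poly_def => /polyP/(_ j).
by rewrite coef_poly lt_jn coef0.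
Qed.

Lemma shifted_monomials_span n (P : {poly R}) : (size P <= n)%N ->
  exists d : nat -> R, P = \sum_(j < n) d j *: ('X - beta%:P) ^+ j.
Proof.
move=> le_Pn; set P' := P \Po ('X + beta%:P).
have le_P'n : (size P' <= n)%N.
  have [P0 | nz_P] := eqVneq P 0; first by rewrite /P' P0 comp_poly0 size_poly0.
  apply: leq_trans (size_comp_poly_leq _ _) _.
  by rewrite size_XaddC muln1 prednK ?size_poly_gt0.
exists (fun j => P'`_j).
have eP' : P' = \poly_(j < n) P'`_j.
  apply/polyP => j; rewrite coef_poly; case: ltnP => // le_nj.
  by rewrite nth_default // (leq_trans le_P'n).
rewrite -[LHS](comp_polyXaddC_K P beta) -/P' {1}eP' poly_def linear_sum.
by apply: eq_bigr => j _; rewrite /= comp_polyZ rmorphXn /= comp_polyX.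
Qed.

End ShiftedMonomials.

Definition shifted_family (beta : CC) (n1 n2 : nat) (R : nat -> {poly CC}) : seq PP :=
  [seq (('X - beta%:P) ^+ j, 0) | j <- iota 0 n1] ++
  [seq (R j, ('X - beta%:P) ^+ j) | j <- iota 0 n2].

Section ShiftedFamily.

Variables (beta : CC) (n1 n2 : nat) (R : nat -> {poly CC}).
Local Notation L := (shifted_family beta n1 n2 R).

Lemma size_shifted_family : size L = (n1 + n2)%N.
Proof. by rewrite size_cat !size_map !size_iota. Qed.

Lemma nth_shifted_family_l i : (i < n1)%N -> nth (0, 0) L i = (('X - beta%:P) ^+ i, 0).
Proof.
move=> lt_i; rewrite nth_cat size_map size_iota lt_i.
by rewrite (nth_map 0%N) ?size_iota ?nth_iota.
Qed.

Lemma nth_shifted_family_r i : (i < n2)%N ->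
  nth (0, 0) L (n1 + i) = (R i, ('X - beta%:P) ^+ i).
Proof.
move=> lt_i; rewrite nth_cat size_map size_iota ltnNge leq_addr /= addKn.
by rewrite (nth_map 0%N) ?size_iota ?nth_iota.
Qed.

Lemma sum_shifted_family1 (d : nat -> CC) :
  \sum_(i < n1 + n2) d i *: (nth (0, 0) L i).1 =
  \sum_(j < n1) d j *: ('X - beta%:P) ^+ j + \sum_(j < n2) d (n1 + j)%N *: R j.
Proof.
rewrite big_split_ord /=; congr (_ + _); apply: eq_bigr => i _.
  by rewrite nth_shifted_family_l.
by rewrite nth_shifted_family_r.
Qed.

Lemma sum_shifted_family2 (d : nat -> CC) :
  \sum_(i < n1 + n2) d i *: (nth (0, 0) L i).2 =
  \sum_(j < n2) d (n1 + j)%N *: ('X - beta%:P) ^+ j.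
Proof.
rewrite big_split_ord /= big1 ?add0r => [|i _]; last by rewrite nth_shifted_family_l ?scaler0.
by apply: eq_bigr => i _; rewrite nth_shifted_family_r.
Qed.

(* The second coordinates determine the last [n2] coefficients, and then the
   first coordinates the first [n1]: the family is triangular. *)
Lemma shifted_family_free (d : nat -> CC) :
  \sum_(i < n1 + n2) d i *: (nth (0, 0) L i).1 = 0 ->
  \sum_(i < n1 + n2) d i *: (nth (0, 0) L i).2 = 0 ->
  forall i, (i < n1 + n2)%N -> d i = 0.
Proof.
rewrite sum_shifted_family1 sum_shifted_family2 => e1.
move/(@shifted_monomials_free _ _ _ (fun j => d (n1 + j)%N)) => d2_0.
have sumR0 : \sum_(j < n2) d (n1 + j)%N *: R j = 0.
  by apply: big1 => j _; rewrite d2_0 ?scale0r.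
rewrite sumR0 addr0 in e1.
move=> i lt_i; case: (ltnP i n1) => [|le_n1i]; first exact: shifted_monomials_free e1 i.
by rewrite -(subnKC le_n1i) d2_0 // -(ltn_add2l n1) subnKC.
Qed.

Lemma shifted_family_span (P Q : {poly CC}) :
  (forall j, (size (R j) <= n1)%N) -> (size P <= n1)%N -> (size Q <= n2)%N ->
  exists d : nat -> CC,
    P = \sum_(i < n1 + n2) d i *: (nth (0, 0) L i).1 /\
    Q = \sum_(i < n1 + n2) d i *: (nth (0, 0) L i).2.
Proof.
move=> le_R le_P le_Q; have [e eQ] := shifted_monomials_span beta le_Q.
have le_PR : (size (P - \sum_(j < n2) e j *: R j)%R <= n1)%N.
  rewrite (leq_trans (size_polyD _ _)) // geq_max le_P size_polyN.
  apply: (big_ind (fun p : {poly CC} => size p <= n1)%N) => [|p q|j _].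
  - by rewrite size_poly0.
  - by move=> le_p le_q; rewrite (leq_trans (size_polyD _ _)) // geq_max le_p.
  - by rewrite (leq_trans (size_scale_leq _ _)).
have [d eP] := shifted_monomials_span beta le_PR.
pose c i := if (i < n1)%N then d i else e (i - n1)%N.
exists c; rewrite sum_shifted_family1 sum_shifted_family2.
have e_r j : c (n1 + j)%N = e j by rewrite /c ltnNge leq_addr /= addKn.
split; last by rewrite eQ; apply: eq_bigr => j _; rewrite e_r.
rewrite -[P](subrK (\sum_(j < n2) e j *: R j)) eP.
by congr (_ + _); apply: eq_bigr => j _; rewrite ?e_r // /c ltn_ord.
Qed.

End ShiftedFamily.

(** * Holomorphic q-differentials *)

Section Curve.

Variable f : {poly CC}.
Hypothesis size_f : size f = 9%N.
Hypothesis sep_f : separable_poly f.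
Implicit Types P Q : {poly CC}.

Lemma f_neq0 : f != 0.
Proof. by rewrite -size_poly_eq0 size_f. Qed.

Lemma lead_coef_f_neq0 : lead_coef f != 0.
Proof. by rewrite lead_coef_eq0 f_neq0. Qed.

Lemma deriv_root_neq0 a : root f a -> f^`().[a] != 0.
Proof. by move: sep_f; rewrite unlock => cop_f; apply: coprimep_root. Qed.

Lemma deriv_f_neq0 : f^`() != 0.
Proof.
have [a fa0] : exists a, root f a by apply/closed_rootP; rewrite size_f.
by apply: contraNneq (deriv_root_neq0 fa0) => ->; rewrite horner0.
Qed.

Definition pqform q (P Q : {poly CC}) : FF := ffmul f (rf P, rf Q) (ffyinv f q).

Lemma pqformK q P Q : ffmul f (pqform q P Q) (ffexp f ffy q) = (rf P, rf Q).
Proof. by rewrite /pqform -ffmulA ffmul_yinv_yexp ?f_neq0 // ffmulC ffmul1. Qed.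

Lemma pqform_eq0 q P Q : pqform q P Q = (0, 0) -> P = 0 /\ Q = 0.
Proof.
move=> ePQ; have := pqformK q P Q; rewrite ePQ /ffmul /= !mul0r !addr0.
by case=> /esym/eqP; rewrite rf_eq0 => /eqP-> /esym/eqP; rewrite rf_eq0 => /eqP->.
Qed.

(* At a branch point [dx = (2 y / f') dy], which cancels [y^q]. *)
Lemma holo_aff_pqform q P Q a b : b ^+ 2 = f.[a] -> holo_at_aff f q a b (pqform q P Q).
Proof.
move=> on_curve; rewrite /holo_at_aff /pqform.
have [b0 | nz_b] := eqVneq b 0.
  rewrite ffmul_yinv_ycexp ?f_neq0 //.
  have nz_f'a : f^`().[a] != 0.
    by apply: deriv_root_neq0; rewrite /root -on_curve b0 expr0n.
  exists (2 ^+ q *: P), (2 ^+ q *: Q), (f^`() ^+ q), 0; split.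
    by rewrite horner0 mul0r addr0 horner_exp expf_neq0.
  have e2 : (rfc 2 / rf f^`()) ^+ q * rf f^`() ^+ q = rfc 2 ^+ q.
    by rewrite -exprMn divfK // rf_eq0 deriv_f_neq0.
  by rewrite ffmulX /ffmul /= rf0 !rfZ rfX rfcX -e2; congr pair; ring.
exists P, Q, (ppexp f (0, 1) q).1, (ppexp f (0, 1) q).2; split.
  have := ppeval_exp on_curve (0, 1) q; rewrite ppeval_y /ppeval => ->.
  by rewrite expf_neq0.
rewrite -[RHS](pqformK q); congr ffmul.
by rewrite -/(ffpp _) ffpp_exp -ffy_pp.
Qed.

(* [v = y / x^4], so [(dx/du) v = - x^2 y / x^4 = y (du/dx)]. *)
Lemma dxdu_v : ffmul f (ffX (- rfx ^+ 2)) (uv (0, 1)) = ffmul f ffy (ffX dudx).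
Proof.
rewrite /uv /uv_elt /= !evinvxE evinv0 evinv1 mul1r /ffmul /ffX /ffy /dudx /=.
have nz_x2 := rfxX_neq0 2.
rewrite (_ : (rfx ^+ 4)^-1 = (rfx ^+ 2)^-1 * (rfx ^+ 2)^-1); last by rewrite -invfM -exprD.
congr pair; first ring.
by rewrite !mulNr mulrA mulfV //; ring.
Qed.

Lemma pqform_at_inf q P Q :
  ffmul f (ffmul f (pqform q P Q) (ffexp f (ffX (- rfx ^+ 2)) q))
       (uv (ppexp (frev f) (0, 1) q))
  = (dudx ^+ q * rf P, dudx ^+ q * rf Q).
Proof.
rewrite uv_exp // -ffmulA -ffexpMn dxdu_v.
by rewrite ffmul_yinv_ycexp ?f_neq0 // ffmulX.
Qed.

Lemma holo_inf_pqform q P Q c :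
  (size P <= (2 * q).+1)%N -> (size Q <= 2 * q - 3)%N -> c ^+ 2 = lead_coef f ->
  holo_at_inf f q c (pqform q P Q).
Proof.
move=> le_P le_Q c2; rewrite /holo_at_inf.
have nz_c : c != 0 by apply: contraNneq lead_coef_f_neq0 => c0; rewrite -c2 c0 expr0n.
exists ((-1) ^+ q *: revp (2 * q) P), ((-1) ^+ q *: revp (2 * q - 4) Q),
  (ppexp (frev f) (0, 1) q).1, (ppexp (frev f) (0, 1) q).2; split.
  have c2' : c ^+ 2 = (frev f).[0] by rewrite frev0.
  by have := ppeval_exp c2' (0, 1) q; rewrite ppeval_y /ppeval => ->; apply: expf_neq0.
rewrite -[uv_elt _ _]/(uv _) pqform_at_inf dudxX /uv_elt !evinvxE !evinvZ.
congr pair; first by rewrite evinv_revp // mulrAC mulrA.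
have [-> | nz_Q] := eqVneq Q 0.
  by rewrite evinv_revp ?size_poly0 // rf0 !(mulr0, mul0r).
have le_4q : (4 <= 2 * q)%N by move: le_Q; rewrite -size_poly_gt0 in nz_Q; lia.
have -> : rfx ^+ (2 * q) = rfx ^+ (2 * q - 4) * rfx ^+ 4 by rewrite -exprD subnK.
rewrite evinv_revp; last by rewrite (leq_trans le_Q) //; lia.
by rewrite invfM !mulrA -!(mulrAC _ (rf Q)).
Qed.

Lemma holo_qdiff_pqform q P Q :
  (size P <= (2 * q).+1)%N -> (size Q <= 2 * q - 3)%N -> holo_qdiff f q (pqform q P Q).
Proof.
move=> le_P le_Q; split=> [a b | c]; first exact: holo_aff_pqform.
exact: holo_inf_pqform.
Qed.

Lemma regular_aff_of_holo q g a b : holo_qdiff f q g -> b ^+ 2 = f.[a] ->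
  regular_aff f a b (ffmul f g (ffexp f ffy q)).
Proof.
move=> [holo_aff _] on_curve; have := holo_aff a b on_curve; rewrite /holo_at_aff.
set G := ffmul f g (ffexp f ffy q).
have -> : g = ffmul f G (ffyinv f q) by rewrite ffmul_yexpK ?f_neq0.
case: eqP => _; last first.
  by rewrite /G ffmul_yexpK ?f_neq0 // ffy_pp -ffpp_exp; apply: regular_aff_mul.
rewrite ffmul_yinv_ycexp ?f_neq0 // => /(regular_aff_mul ((2^-1 *: f^`()) ^+ q, 0)).
rewrite -ffmulA ffmulC -ffmulA [ffpp _]/ffpp /= rf0 -/(ffX _) ffXM.
have -> : rf ((2^-1 *: f^`()) ^+ q) * (rfc 2 / rf f^`()) ^+ q = 1.
  have nz_f' : rf f^`() != 0 by rewrite rf_eq0 deriv_f_neq0.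
  rewrite rfX rfZ -exprMn [X in X ^+ q](_ : _ = rfc (2^-1 * 2) * (rf f^`() / rf f^`())).
    by rewrite mulVf ?pnatr_eq0 // divff // rfc1 mulr1 expr1n.
  by rewrite rfcM; ring.
by rewrite ffmulC ffmul1.
Qed.

Lemma poly_pair_of_holo q g : holo_qdiff f q g ->
  exists P Q, ffmul f g (ffexp f ffy q) = (rf P, rf Q).
Proof.
move=> holo_g; case eAB: (ffmul f g (ffexp f ffy q)) => [A B].
have regAB a b : b ^+ 2 = f.[a] -> regular_aff f a b (A, B).
  by move=> on_curve; rewrite -eAB; apply: regular_aff_of_holo.
have noAB a : no_pole_at rf a A /\ no_pole_at rf a B.
  have b2 := sqrtCK f.[a].
  exact: no_pole_of_regular_aff b2 (regAB _ _ b2) (regAB _ _ (etrans (sqrrN _) b2)).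
have [P ->] := polynomial_of_no_pole (fun a => (noAB a).1).
have [Q ->] := polynomial_of_no_pole (fun a => (noAB a).2).
by exists P, Q.
Qed.

Lemma pqform_of_holo q g : holo_qdiff f q g ->
  exists P Q, [/\ (size P <= (2 * q).+1)%N, (size Q <= 2 * q - 3)%N & g = pqform q P Q].
Proof.
move=> holo_g; have [P [Q ePQ]] := poly_pair_of_holo holo_g.
have eg : g = pqform q P Q by rewrite /pqform -ePQ ffmul_yexpK ?f_neq0.
have regPQ c : c ^+ 2 = lead_coef f ->
    regular_inf f c (dudx ^+ q * rf P, dudx ^+ q * rf Q).
  move=> c2; rewrite -(pqform_at_inf q P Q) -eg.
  by apply: regular_inf_mul => //; case: holo_g => _; apply.
have c2 := sqrtCK (lead_coef f).
have [noP noQ] :=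
  no_pole_of_regular_inf size_f c2 (regPQ _ c2) (regPQ _ (etrans (sqrrN _) c2)).
exists P, Q; split=> //; first exact: size_le_of_no_pole_inf.
have : (size (Q * 'X^4)%R <= (2 * q).+1)%N.
  by apply: size_le_of_no_pole_inf; rewrite rfM /rf rmorphXn mulrA.
have [-> | nz_Q] := eqVneq Q 0; first by rewrite size_poly0.
by rewrite size_mulXn //; move: (size Q) => n; lia.
Qed.

Definition pqforms q (L : seq PP) : seq FF := [seq pqform q V.1 V.2 | V <- L].

Lemma pqform_sum q n (d : nat -> CC) (V : nat -> PP) :
  (\sum_(i < n) rfc (d i) * (pqform q (V i).1 (V i).2).1,
   \sum_(i < n) rfc (d i) * (pqform q (V i).1 (V i).2).2)
  = pqform q (\sum_(i < n) d i *: (V i).1) (\sum_(i < n) d i *: (V i).2).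
Proof.
rewrite /pqform /ffmul /= /rf !rmorph_sum /=.
congr pair; rewrite !mulr_suml -big_split /=.
all: by apply: eq_bigr => i _; rewrite -!/(rf _) !rfZ; ring.
Qed.

Lemma ffcomb_pqforms q (L : seq PP) (c : 'I_(size (pqforms q L)) -> CC) (d : nat -> CC) :
  (forall i, c i = d i) ->
  ffcomb c = pqform q (\sum_(i < size L) d i *: (nth (0, 0) L i).1)
                      (\sum_(i < size L) d i *: (nth (0, 0) L i).2).
Proof.
move=> cd; rewrite -pqform_sum /ffcomb.
have nthE (i : 'I_(size (pqforms q L))) :
    nth (0, 0) (pqforms q L) i = pqform q (nth (0, 0) L i).1 (nth (0, 0) L i).2.
  by rewrite (nth_map (0, 0)) // -(size_map (fun V : PP => pqform q V.1 V.2)).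
by congr pair; under eq_bigr => i _ do rewrite cd nthE; rewrite size_map.
Qed.

Lemma is_basis_pqforms q beta n1 n2 (R : nat -> {poly CC}) :
  n1 = (2 * q).+1 -> n2 = (2 * q - 3)%N -> (forall j, (size (R j) <= n1)%N) ->
  is_basis_H0 f q (pqforms q (shifted_family beta n1 n2 R)).
Proof.
move=> def_n1 def_n2 le_R; set L := shifted_family beta n1 n2 R.
have size_L : size L = (n1 + n2)%N := size_shifted_family beta n1 n2 R.
split; [|split].
- move=> g /mapP [V]; rewrite mem_cat => /orP [] /mapP [j];
    rewrite mem_iota add0n => /andP [_ lt_j] -> ->; apply: holo_qdiff_pqform;
    by rewrite /= ?size_exp_XsubC ?size_poly0 -?def_n1 -?def_n2.
- move=> c; pose d i := oapp c 0 (insub i).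
  have cd i : c i = d i by rewrite /d valK.
  rewrite (ffcomb_pqforms cd) size_L => /pqform_eq0 [e1 e2] i.
  rewrite cd (shifted_family_free e1 e2) // -size_L.
  by rewrite -(size_map (fun V : PP => pqform q V.1 V.2)).
- move=> g /pqform_of_holo [P [Q [le_P le_Q ->]]].
  rewrite -def_n1 in le_P; rewrite -def_n2 in le_Q.
  have [d [eP eQ]] := shifted_family_span beta le_R le_P le_Q.
  by exists (fun i => d i); rewrite (ffcomb_pqforms (d := d)) // size_L -eP -eQ.
Qed.

End Curve.

Lemma bq_eltE f q beta j : bq_elt f q beta j = pqform f q (('X - beta%:P) ^+ j) 0.
Proof. by rewrite /bq_elt /pqform /ffpoly /ffX rf0. Qed.

Lemma bq_elt_yE f q beta j : bq_elt_y f q beta j = pqform f q 0 (('X - beta%:P) ^+ j).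
Proof.
rewrite /bq_elt_y /pqform; congr ffmul.
by rewrite /ffmul /ffpoly /ffX /ffy /= rf0; congr pair; ring.
Qed.

Lemma B1E f beta : B1 f beta = pqforms f 1 (shifted_family beta 3 0 (fun _ => 0)).
Proof. by rewrite /pqforms map_cat cats0 -map_comp; apply: eq_map => j; rewrite bq_eltE. Qed.

Lemma B2E f beta b :
  B2 f beta b = pqforms f 2 (shifted_family beta 5 1 (fun _ => - f_beta4 f beta b)).
Proof.
rewrite /B2 /pqforms map_cat -!map_comp; congr (_ ++ _).
by rewrite /= /pqform expr0 rf1 /ffadd /ffy /ffpoly /ffX /= add0r addr0.
Qed.

Lemma BqE f q beta :
  Bq f q beta = pqforms f q (shifted_family beta (2 * q).+1 (2 * q - 3) (fun _ => 0)).
Proof.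
rewrite /Bq /pqforms map_cat -!map_comp.
by congr (_ ++ _); apply: eq_map => j; rewrite ?bq_eltE ?bq_elt_yE.
Qed.

Lemma size_f_beta4 f beta b : (size (- f_beta4 f beta b) <= 5)%N.
Proof.
rewrite size_polyN /f_beta4; case: ifP => _; first by rewrite size_poly0.
rewrite /taylor4_branch -ltnS -(size_exp_XsubC 5 beta) ltn_modpN0 //.
by rewrite -size_poly_eq0 size_exp_XsubC.
Qed.

Theorem mainTheorem1 (f : {poly CC}) (hdeg : size f = 9%N)
    (hsep : separable_poly f) :
  (forall beta : CC, is_basis_H0 f 1 (B1 f beta)) /\
  (forall beta b : CC, (~~ root f beta -> b ^+ 2 = f.[beta]) ->
      is_basis_H0 f 2 (B2 f beta b)) /\
  (forall (q : nat) (beta : CC), (2 <= q)%N -> root f beta ->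
      is_basis_H0 f q (Bq f q beta)).
Proof.
split; [|split].
- by move=> beta; rewrite B1E; apply: is_basis_pqforms => // j; rewrite size_poly0.
- by move=> beta b _; rewrite B2E; apply: is_basis_pqforms => // j; apply: size_f_beta4.
- by move=> q beta _ _; rewrite BqE; apply: is_basis_pqforms => // j; rewrite size_poly0.
Qed.
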